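(* Cobordism is an equivalence relation on $\mathcal{S}_2$; in particular, every $G\in\mathcal{S}_2$ is cobordant to itself, i.e. there is a three-dimensional geometric graph with boundary $H$ whose boundary is isomorphic to the disjoint union of two copies of $G$.
   Context: All graphs are finite simple graphs. For a vertex $x$, $S(x)$ is the subgraph induced by the neighbors of $x$. A graph is contractible if it is $K_1$, or, inductively, if there is a vertex $x$ with both $S(x)$ and the subgraph induced by $V\setminus\{x\}$ contractible. $\mathcal{G}_0$: graphs without edges; $\mathcal{S}_0$: those with two vertices; $\mathcal{B}_0$: those with one vertex. For $d\ge1$: $\mathcal{G}_d$ is the class of graphs in which every $S(x)$ lies in $\mathcal{S}_{d-1}\cup\mathcal{B}_{d-1}$; the boundary $\delta G$ is the subgraph induced by vertices with $S(x)\in\mathcal{B}_{d-1}$, and the interior (other vertices) must be nonempty; $\mathcal{B}_d$: contractible graphs in $\mathcal{G}_d$ with boundary in $\mathcal{S}_{d-1}$; $\mathcal{S}_d$: non-contractible graphs in $\mathcal{G}_d$ such that removing any single vertex yields a graph in $\mathcal{B}_d$. A three-dimensional geometric graph with boundary is a graph in which every unit sphere lies in $\mathcal{S}_2\cup\mathcal{B}_2$ (i.e. a graph in $\mathcal{G}_3$). Two graphs $G_1,G_2$ (two-dimensional, without boundary) are cobordant if there is a three-dimensional geometric graph with boundary $H$ such that the boundary $\delta H$ is the disjoint union $G_1\sqcup G_2$. *)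

From mathcomp Require Import all_boot.
Set Implicit Arguments. Unset Strict Implicit. Unset Printing Implicit Defensive.

Record graph := Graph {
  gV :> finType;
  gadj : rel gV;
  gsym : symmetric gadj;
  girr : irreflexive gadj }.

Section Induced.
Variable G : graph.
Local Notation V := (gV G).
Local Notation adj := (@gadj G).

(* Induced subgraphs are represented by their vertex sets A : {set V}. *)

Definition nbr (A : {set V}) (x : V) : {set V} := [set y in A | adj x y].

Inductive contractible : {set V} -> Prop :=
| contr_K1 : forall x, contractible [set x]
| contr_step : forall (A : {set V}) (x : V), x \in A -> contractible (nbr A x) ->
    contractible (A :\ x) -> contractible A.

Definition no_edges (A : {set V}) : Prop :=
  forall x y, x \in A -> y \in A -> ~~ adj x y.

(* G_d for d >= 1, given the classes S' = S_{d-1}, B' = B_{d-1} *)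
Definition Gstep (S' B' : {set V} -> Prop) (A : {set V}) : Prop :=
  (forall x, x \in A -> S' (nbr A x) \/ B' (nbr A x)) /\
  (exists x, x \in A /\ ~ B' (nbr A x)).

Definition is_boundary (B' : {set V} -> Prop) (A Bd : {set V}) : Prop :=
  forall x, x \in Bd <-> (x \in A /\ B' (nbr A x)).

Fixpoint SB (d : nat) : ({set V} -> Prop) * ({set V} -> Prop) :=
  match d with
  | 0 => (fun A : {set V} => #|A| = 2 /\ no_edges A, fun A : {set V} => #|A| = 1)
  | d'.+1 =>
      let S' := (SB d').1 in let B' := (SB d').2 in
      let Bd := fun A : {set V} => contractible A /\ Gstep S' B' A /\
                  exists D : {set V}, is_boundary B' A D /\ S' D in
      (fun A : {set V} => Gstep S' B' A /\ ~ contractible A /\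
                  forall x, x \in A -> Bd (A :\ x),
       Bd)
  end.

Definition inS (d : nat) (A : {set V}) := (SB d).1 A.
Definition inB (d : nat) (A : {set V}) := (SB d).2 A.

Definition inG (d : nat) (A : {set V}) : Prop :=
  match d with
  | 0 => no_edges A
  | d'.+1 => Gstep (inS d') (inB d') A
  end.

Definition boundary_of (d : nat) (A Bd : {set V}) : Prop :=
  match d with
  | 0 => Bd = set0
  | d'.+1 => is_boundary (inB d') A Bd
  end.
End Induced.

Definition in_S (d : nat) (G : graph) : Prop := inS d [set: gV G].
Definition in_G (d : nat) (G : graph) : Prop := inG d [set: gV G].

Definition sum_adj (G1 G2 : graph) : rel (gV G1 + gV G2)%type :=
  fun u v => match u, v with
  | inl a, inl b => @gadj G1 a b
  | inr a, inr b => @gadj G2 a b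
  | _, _ => false end.

Lemma sum_adj_sym (G1 G2 : graph) : symmetric (@sum_adj G1 G2).
Proof. by case=> a [] b //=; rewrite gsym. Qed.

Lemma sum_adj_irr (G1 G2 : graph) : irreflexive (@sum_adj G1 G2).
Proof. by case=> a /=; rewrite girr. Qed.

Definition dunion (G1 G2 : graph) : graph :=
  Graph (@sum_adj_sym G1 G2) (@sum_adj_irr G1 G2).

Definition iso_to_induced (G H : graph) (B : {set gV H}) : Prop :=
  exists f : gV G -> gV H,
    injective f /\ f @: [set: gV G] = B /\
    forall x y, @gadj G x y = @gadj H (f x) (f y).

(* three-dimensional geometric graph with boundary: a graph in G_3 *)
Definition cobordant (G1 G2 : graph) : Prop :=
  exists H : graph, in_G 3 H /\
    exists Bd : {set gV H}, boundary_of 3 [set: gV H] Bd /\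
      iso_to_induced (dunion G1 G2) Bd.

(* Any two graphs of S_2 are cobordant through the disjoint union of their cones,
   because the cone c + A over a d-sphere A is a (d+1)-ball with boundary A: it is
   contractible, the unit sphere of the apex c is A, and the unit sphere of a rim vertex
   a is the cone over the (d-1)-sphere S(a), a d-ball by induction on d. That every unit
   sphere of a d-sphere is a (d-1)-sphere, never a (d-1)-ball, comes from the Euler
   characteristic minus one: it satisfies chi A = chi (A - x) - chi S(x), vanishes on
   contractible graphs and equals (-1)^d on d-spheres. *)

From mathcomp Require Import all_boot.
From mathcomp Require Import ssralg ssrint zify.
Set Implicit Arguments. Unset Strict Implicit. Unset Printing Implicit Defensive.
Import GRing.Theory.

Section EulerCharacteristic.
Variable G : graph.
Local Notation V := (gV G).
Local Notation adj := (@gadj G).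

Lemma nbr_notin (A : {set V}) x : x \notin nbr A x.
Proof. by rewrite inE girr andbF. Qed.

Lemma nbr_sub (A : {set V}) x : nbr A x \subset A.
Proof. by apply/subsetP => y; rewrite inE => /andP []. Qed.

Definition cliqueb (K : {set V}) : bool :=
  [forall x in K, forall y in K, (x != y) ==> adj x y].

Lemma cliqueP (K : {set V}) :
  reflect {in K &, forall x y, x != y -> adj x y} (cliqueb K).
Proof.
apply: (iffP forall_inP) => [cK x y xK yK | cK x xK].
  by move/forall_inP: (cK x xK) => /(_ y yK) /implyP.
by apply/forall_inP => y yK; apply/implyP; apply: cK.
Qed.

Lemma clique_subset (K L : {set V}) : K \subset L -> cliqueb L -> cliqueb K.
Proof.
move=> /subsetP KL /cliqueP cL; apply/cliqueP => x y xK yK.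
exact: cL (KL x xK) (KL y yK).
Qed.

Lemma clique_setU1 (K : {set V}) x :
  cliqueb K -> {in K, forall y, adj x y} -> cliqueb (x |: K).
Proof.
move=> /cliqueP cK xK; apply/cliqueP => y z /setU1P [-> | yK] /setU1P [-> | zK].
- by rewrite eqxx.
- by move=> _; exact: xK.
- by rewrite gsym => _; exact: xK.
- exact: cK.
Qed.

Definition cliques (A : {set V}) (p : bool) : {set {set V}} :=
  [set K : {set V} | [&& K \subset A, cliqueb K & odd #|K| == p]].

(* The empty clique is counted, so [chi] is the Euler characteristic minus one. *)
Definition chi (A : {set V}) : int := (#|cliques A true|%:Z - #|cliques A false|%:Z)%R.

Lemma cliques_setD1 (A : {set V}) x p : x \in A ->
  cliques A p = cliques (A :\ x) p :|: [set x |: K | K in cliques (nbr A x) (~~ p)].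
Proof.
move=> xA; apply/setP => K; rewrite !inE; apply/idP/idP.
- case/and3P => KA cK oK; apply/orP; case xK: (x \in K); [right | left].
  + apply/imsetP; exists (K :\ x); last by rewrite setD1K.
    rewrite inE (clique_subset (subD1set K x) cK) /=; apply/andP; split.
      apply/subsetP => y /setD1P [yx yK]; rewrite inE (subsetP KA y yK).
      by apply: (cliqueP _ cK) => //; rewrite eq_sym.
    by move: oK; rewrite (cardsD1 x K) xK /= => /eqP <-; rewrite negbK.
  + apply/and3P; split => //; apply/subsetP => y yK; rewrite !inE (subsetP KA y yK) andbT.
    by apply: contraFneq xK => <-.
- case/orP => [/and3P [/subsetP KA cK oK] | /imsetP [L]].
    by apply/and3P; split => //; apply/subsetP => y /KA /setD1P [].
  rewrite inE => /and3P [LN cL oL] ->.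
  have xL : x \notin L by apply: contraNN (nbr_notin A x) => /(subsetP LN).
  apply/and3P; split.
  - by rewrite subUset sub1set xA (subset_trans LN (nbr_sub A x)).
  - by apply: clique_setU1 cL _ => y /(subsetP LN); rewrite inE => /andP [].
  - by rewrite cardsU1 xL /= (eqP oL) negbK.
Qed.

Lemma card_cliques_setD1 (A : {set V}) x p : x \in A ->
  #|cliques A p| = #|cliques (A :\ x) p| + #|cliques (nbr A x) (~~ p)|.
Proof.
move=> xA; rewrite (cliques_setD1 p xA) cardsU.
have -> : cliques (A :\ x) p :&: [set x |: K | K in cliques (nbr A x) (~~ p)] = set0.
  apply/setP => K; rewrite !inE; apply/negP => /andP [/and3P [KA _ _] /imsetP [L _ KL]].
  by move/subsetP: KA => /(_ x); rewrite KL !inE eqxx => /(_ isT) /andP [].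
rewrite cards0 subn0 card_in_imset // => K L; rewrite !inE.
move=> /and3P [/subsetP KN _ _] /and3P [/subsetP LN _ _] KL.
have xK : x \notin K by apply: contraNN (nbr_notin A x) => /KN.
have xL : x \notin L by apply: contraNN (nbr_notin A x) => /LN.
by rewrite -(setU1K xK) -(setU1K xL) KL.
Qed.

Lemma chi_setD1 (A : {set V}) x : x \in A -> chi A = (chi (A :\ x) - chi (nbr A x))%R.
Proof. by move=> xA; rewrite /chi !(card_cliques_setD1 _ xA) /=; lia. Qed.

Lemma chi0 : chi set0 = (-1)%R.
Proof.
rewrite /chi.
have -> : cliques set0 true = set0.
  by apply/setP => K; rewrite !inE subset0; apply/negP => /and3P [/eqP -> _]; rewrite cards0.
have -> : cliques set0 false = [set set0].
  apply/setP => K; rewrite !inE subset0; apply/idP/idP => [/and3P [] // | /eqP ->].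
  by rewrite eqxx cards0 andbT; apply/cliqueP => x; rewrite inE.
by rewrite cards0 cards1.
Qed.

Lemma nbr_set1 (x : V) : nbr [set x] x = set0.
Proof. by apply/setP => y; rewrite !inE; case: eqP => // ->; rewrite girr. Qed.

Lemma chi_contractible (A : {set V}) : contractible A -> chi A = 0%R.
Proof.
elim=> [x | B x xB _ IHn _ IHd]; last by rewrite (chi_setD1 xB) IHn IHd.
by rewrite (chi_setD1 (set11 x)) setDv nbr_set1 chi0.
Qed.

Lemma inS0E (A : {set V}) : inS 0 A = (#|A| = 2 /\ no_edges A).
Proof. by []. Qed.

Lemma inB0E (A : {set V}) : inB 0 A = (#|A| = 1).
Proof. by []. Qed.

Lemma inSSE d (A : {set V}) : inS d.+1 A =
  (Gstep (inS d) (inB d) A /\ ~ contractible A /\ forall x, x \in A -> inB d.+1 (A :\ x)).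
Proof. by []. Qed.

Lemma inBSE d (A : {set V}) : inB d.+1 A =
  (contractible A /\ Gstep (inS d) (inB d) A /\
     exists D : {set V}, is_boundary (inB d) A D /\ inS d D).
Proof. by []. Qed.

Lemma inB_contractible d (A : {set V}) : inB d A -> contractible A.
Proof.
case: d => [|d]; last by rewrite inBSE => -[].
by rewrite inB0E => /eqP /cards1P [x ->]; exact: contr_K1.
Qed.

Lemma inS_notB d (A : {set V}) : inS d A -> ~ inB d A.
Proof.
case: d => [|d]; first by rewrite inS0E inB0E => -[-> _].
by rewrite inSSE => -[_ [nc _]] /inB_contractible.
Qed.

Lemma no_edges_nbr (A : {set V}) a : no_edges A -> a \in A -> nbr A a = set0.
Proof.
move=> noA aA; apply/setP => y; rewrite !inE.
by apply/negP => /andP [yA]; apply/negP/noA.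
Qed.

Lemma chi_inS d (A : {set V}) : inS d A -> chi A = ((-1) ^+ d)%R.
Proof.
elim: d A => [|d IHd] A.
  rewrite inS0E => -[cardA noA].
  have [a aA] : exists a, a \in A by apply/card_gt0P; rewrite cardA.
  have /cards1P [b Ab] : #|A :\ a| == 1 by move: cardA; rewrite (cardsD1 a) aA add1n => -[->].
  by rewrite (chi_setD1 aA) (no_edges_nbr noA aA) Ab (chi_setD1 (set11 b)) setDv nbr_set1 chi0.
rewrite inSSE => -[[sphA [x [xA notB]]] [_ ballA]].
have Sx : inS d (nbr A x) by case: (sphA x xA) => // /notB.
by rewrite (chi_setD1 xA) (chi_contractible (inB_contractible (ballA x xA))) (IHd _ Sx)
  exprS mulN1r sub0r.
Qed.

(* A unit sphere in [B_d] would make both terms of [chi_setD1] vanish. *)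
Lemma inS_nbr d (A : {set V}) : inS d.+1 A -> forall x, x \in A -> inS d (nbr A x).
Proof.
move=> SA x xA; have := chi_inS SA.
move: SA; rewrite inSSE => -[[sphA _] [_ ballA]].
case: (sphA x xA) => // /inB_contractible /chi_contractible chiN.
rewrite (chi_setD1 xA) (chi_contractible (inB_contractible (ballA x xA))) chiN subrr.
by move/eqP; rewrite eq_sym signr_eq0.
Qed.

End EulerCharacteristic.

Section Embedding.
Variables G H : graph.
Variable f : gV G -> gV H.
Hypothesis f_inj : injective f.
Hypothesis f_adj : forall x y, @gadj H (f x) (f y) = @gadj G x y.

Lemma nbr_imset (A : {set gV G}) x : nbr (f @: A) (f x) = f @: nbr A x.
Proof.
apply/setP => y; rewrite inE; apply/andP/imsetP => [[/imsetP [z zA ->]] | [z]].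
  by rewrite f_adj => xz; exists z; rewrite // inE zA.
by rewrite inE => /andP [zA xz] ->; rewrite imset_f // f_adj.
Qed.

Lemma imsetD1 (A : {set gV G}) x : f @: (A :\ x) = f @: A :\ f x.
Proof.
apply/setP => y; rewrite [in RHS]in_setD1; apply/imsetP/andP => [[z /setD1P [zx zA] ->] | ].
  by rewrite (inj_eq f_inj) zx imset_f.
case=> yx /imsetP [z zA yz]; exists z => //; apply/setD1P; split => //.
by move: yx; rewrite yz (inj_eq f_inj).
Qed.

Lemma contractible_imset (A : {set gV G}) : contractible (f @: A) <-> contractible A.
Proof.
split; last first.
  elim=> [x | B x xB _ IHn _ IHd]; first by rewrite imset_set1; exact: contr_K1.
  by apply: (contr_step (imset_f f xB)); rewrite ?nbr_imset -?imsetD1.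
move=> cfA; move: cfA (erefl (f @: A)); move: {1 2}(f @: A) => B cB.
elim: cB A => [y | B0 y yB _ IHn _ IHd] A AB.
  have /cards1P [x ->] : #|A| == 1 by rewrite -(card_imset _ f_inj) -AB cards1.
  exact: contr_K1.
have /imsetP [x xA yx] : y \in f @: A by rewrite -AB.
apply: (contr_step xA); [apply: IHn | apply: IHd].
  by rewrite -nbr_imset -yx AB.
by rewrite imsetD1 -yx AB.
Qed.

Section Classes.
Variables (S' B' : {set gV G} -> Prop) (S'' B'' : {set gV H} -> Prop).
Hypothesis S_imset : forall A : {set gV G}, S'' (f @: A) <-> S' A.
Hypothesis B_imset : forall A : {set gV G}, B'' (f @: A) <-> B' A.

Lemma Gstep_imset (A : {set gV G}) : Gstep S'' B'' (f @: A) <-> Gstep S' B' A.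
Proof.
split=> -[sphA [y [yA notB]]]; split.
- by move=> x xA; rewrite -S_imset -B_imset -nbr_imset; apply: sphA; rewrite imset_f.
- case/imsetP: yA notB => x xA -> notB; exists x; split => //.
  by rewrite -B_imset -nbr_imset.
- by move=> _ /imsetP [x xA ->]; rewrite nbr_imset S_imset B_imset; apply: sphA.
- by exists (f y); rewrite imset_f // nbr_imset B_imset.
Qed.

Lemma boundary_imset (A D : {set gV G}) :
  is_boundary B'' (f @: A) (f @: D) <-> is_boundary B' A D.
Proof.
split=> bD x.
- by rewrite -(mem_imset _ _ f_inj) bD (mem_imset _ _ f_inj) nbr_imset B_imset.
- split=> [/imsetP [y /bD [yA By] ->] | [/imsetP [y yA ->]]].
    by rewrite imset_f // nbr_imset B_imset.
  by rewrite nbr_imset B_imset => By; rewrite imset_f //; apply/bD.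
Qed.

Lemma has_boundary_imset (A : {set gV G}) :
  (exists E, is_boundary B'' (f @: A) E /\ S'' E) <->
  (exists D, is_boundary B' A D /\ S' D).
Proof.
split=> [[E [bE SE]] | [D [bD SD]]]; last by exists (f @: D); rewrite boundary_imset S_imset.
have ED : E = f @: (f @^-1: E).
  apply/setP => y; apply/idP/imsetP => [yE | [x + ->]]; last by rewrite inE.
  by case/bE: (yE) => /imsetP [x _ yx] _; exists x; rewrite // inE -yx.
by exists (f @^-1: E); rewrite -boundary_imset -S_imset -ED.
Qed.
End Classes.

Lemma no_edges_imset (A : {set gV G}) : no_edges (f @: A) <-> no_edges A.
Proof.
split=> noA x y xA yA; first by rewrite -f_adj; apply: noA; rewrite imset_f.
case/imsetP: xA => x' xA ->; case/imsetP: yA => y' yA ->.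
by rewrite f_adj; apply: noA.
Qed.

Lemma inSB_imset d : (forall A : {set gV G}, inS d (f @: A) <-> inS d A) /\
                     (forall A : {set gV G}, inB d (f @: A) <-> inB d A).
Proof.
elim: d => [|d [IHS IHB]].
  by split=> A; rewrite ?inS0E ?inB0E (card_imset _ f_inj) ?no_edges_imset.
have inBS_imset (A : {set gV G}) : inB d.+1 (f @: A) <-> inB d.+1 A.
  by rewrite !inBSE contractible_imset (Gstep_imset IHS IHB) (has_boundary_imset IHS IHB).
split=> // A; rewrite !inSSE contractible_imset (Gstep_imset IHS IHB).
do 2 apply: and_iff_compat_l; split=> ballA x xA.
  by rewrite -inBS_imset imsetD1; apply: ballA; rewrite imset_f.
by case/imsetP: xA => y yA ->; rewrite -imsetD1 inBS_imset; apply: ballA.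
Qed.

Lemma inS_imset d (A : {set gV G}) : inS d (f @: A) <-> inS d A.
Proof. exact: (inSB_imset d).1. Qed.

Lemma inB_imset d (A : {set gV G}) : inB d (f @: A) <-> inB d A.
Proof. exact: (inSB_imset d).2. Qed.
End Embedding.

Section Cone.
Variable W : graph.
Local Notation V := (gV W).
Local Notation adj := (@gadj W).

Lemma nbr_apex (c : V) (B : {set V}) :
  c \notin B -> {in B, forall b, adj c b} -> nbr (c |: B) c = B.
Proof.
move=> cB adjB; apply/setP => y; rewrite !inE.
case: eqP => [-> | _] /=; first by rewrite girr (negPf cB).
by case: (boolP (y \in B)) => // /adjB ->.
Qed.

Lemma nbr_cone (c : V) (B : {set V}) b : adj c b -> nbr (c |: B) b = c |: nbr B b.
Proof. by move=> cb; apply/setP => y; rewrite !inE; case: eqP => [-> | _] //=; rewrite gsym cb. Qed.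

Lemma cone_contractible (c : V) (B : {set V}) :
  c \notin B -> {in B, forall b, adj c b} -> contractible (c |: B).
Proof.
elim: {B}_.+1 {-2}B (ltnSn #|B|) => // n IHn B /ltnSE leBn cB adjB.
have [-> | [b bB]] := set_0Vmem B; first by rewrite setU0; exact: contr_K1.
have cb := adjB b bB.
apply: (@contr_step _ _ b); first by rewrite !inE bB orbT.
  rewrite nbr_cone //; apply: IHn.
  - apply: leq_trans leBn; apply: proper_card; apply/properP; split; first exact: nbr_sub.
    by exists b; rewrite // nbr_notin.
  - by rewrite inE negb_and cB.
  - by move=> y /(subsetP (nbr_sub B b)) /adjB.
have -> : (c |: B) :\ b = c |: (B :\ b).
  apply/setP => y; rewrite !inE; case: eqP => [-> | _] //=.
  by case: eqP cb => // ->; rewrite girr.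
apply: IHn.
- by rewrite (cardsD1 b B) bB in leBn.
- by rewrite inE negb_and cB orbT.
- by move=> y /setD1P [_ /adjB].
Qed.

Lemma cone_ball_of_rim (d : nat) (c : V) (A : {set V}) :
  inS d A -> c \notin A -> {in A, forall a, adj c a} ->
  {in A, forall a, inB d (c |: nbr A a)} -> inB d.+1 (c |: A).
Proof.
move=> SA cA adjA rimB.
have sph_c : nbr (c |: A) c = A := nbr_apex cA adjA.
have sph_a a : a \in A -> nbr (c |: A) a = c |: nbr A a by move/adjA/nbr_cone.
rewrite inBSE; split; first exact: cone_contractible.
split; [split | exists A; split => //].
- move=> x /setU1P [-> | xA]; first by left; rewrite sph_c.
  by right; rewrite sph_a //; exact: rimB.
- by exists c; rewrite setU11 sph_c; split => //; exact: inS_notB.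
- move=> x; split => [xA | [/setU1P [-> | //]]].
    by rewrite setU1r // sph_a //; split => //; exact: rimB.
  by rewrite sph_c => /(inS_notB SA).
Qed.

Lemma cone_sphere_ball (d : nat) (c : V) (A : {set V}) :
  inS d A -> c \notin A -> {in A, forall a, adj c a} -> inB d.+1 (c |: A).
Proof.
elim: d A => [|d IHd] A SA cA adjA; apply: cone_ball_of_rim => // a aA.
  by move: SA; rewrite inS0E => -[_ /no_edges_nbr ->]; rewrite // setU0 inB0E cards1.
apply: IHd; first exact: inS_nbr SA a aA.
- by rewrite inE negb_and cA.
- by move=> y /(subsetP (nbr_sub A a)) /adjA.
Qed.
End Cone.

Definition cone_adj (G : graph) : rel (option (gV G)) := fun u v =>
  match u, v with
  | Some a, Some b => @gadj G a b
  | None, None => false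
  | _, _ => true
  end.

Lemma cone_adj_sym (G : graph) : symmetric (@cone_adj G).
Proof. by case=> [a|] [b|] //=; rewrite gsym. Qed.

Lemma cone_adj_irr (G : graph) : irreflexive (@cone_adj G).
Proof. by case=> [a|] //=; rewrite girr. Qed.

Definition cone (G : graph) : graph := Graph (@cone_adj_sym G) (@cone_adj_irr G).

Section ConeGraph.
Variable G : graph.

Lemma cone_Some_inj : injective (Some : gV G -> gV (cone G)).
Proof. by move=> x y []. Qed.

Lemma cone_adj_Some (x y : gV G) : @gadj (cone G) (Some x) (Some y) = gadj x y.
Proof. by []. Qed.

Lemma setT_cone : [set: gV (cone G)] = None |: Some @: [set: gV G].
Proof. by apply/setP => -[a|]; rewrite !inE ?imset_f. Qed.

Lemma None_notin_Some (A : {set gV G}) : (None : gV (cone G)) \notin Some @: A.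
Proof. by apply/imsetP => -[]. Qed.

Lemma cone_nbr_apex : nbr [set: gV (cone G)] None = Some @: [set: gV G].
Proof. by rewrite setT_cone nbr_apex ?None_notin_Some // => _ /imsetP [a _ ->]. Qed.

Lemma cone_nbr_Some (x : gV G) :
  nbr [set: gV (cone G)] (Some x) = None |: Some @: nbr [set: gV G] x.
Proof. by rewrite setT_cone nbr_cone // (nbr_imset cone_adj_Some). Qed.

Lemma cone_spheres d : in_S d.+1 G ->
  inS d.+1 (nbr [set: gV (cone G)] None) /\
  forall x, inB d.+1 (nbr [set: gV (cone G)] (Some x)).
Proof.
move=> SG; rewrite cone_nbr_apex (inS_imset cone_Some_inj cone_adj_Some) //; split=> // x.
rewrite cone_nbr_Some; apply: cone_sphere_ball; last by move=> _ /imsetP [a _ ->].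
  by rewrite (inS_imset cone_Some_inj cone_adj_Some) //; exact: inS_nbr SG x (in_setT x).
exact: None_notin_Some.
Qed.
End ConeGraph.

Section DisjointUnion.
Variables G1 G2 : graph.
Local Notation U := (gV (dunion G1 G2)).

Lemma dunion_nbr_inl (u : gV G1) :
  nbr [set: U] (inl u) = inl @: nbr [set: gV G1] u.
Proof.
apply/setP => v; rewrite inE in_setT /=; apply/idP/imsetP => [| [w + ->]].
  by case: v => // y uy; exists y; rewrite // inE in_setT.
by rewrite inE in_setT.
Qed.

Lemma dunion_nbr_inr (u : gV G2) :
  nbr [set: U] (inr u) = inr @: nbr [set: gV G2] u.
Proof.
apply/setP => v; rewrite inE in_setT /=; apply/idP/imsetP => [| [w + ->]].
  by case: v => // y uy; exists y; rewrite // inE in_setT.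
by rewrite inE in_setT.
Qed.

Lemma dunion_inl_inj : injective (inl : gV G1 -> U).
Proof. by move=> x y []. Qed.

Lemma dunion_inr_inj : injective (inr : gV G2 -> U).
Proof. by move=> x y []. Qed.

Lemma dunion_adj_inl (x y : gV G1) : @gadj (dunion G1 G2) (inl x) (inl y) = gadj x y.
Proof. by []. Qed.

Lemma dunion_adj_inr (x y : gV G2) : @gadj (dunion G1 G2) (inr x) (inr y) = gadj x y.
Proof. by []. Qed.
End DisjointUnion.

Section ConePair.
Variables G1 G2 : graph.
Local Notation H := (dunion (cone G1) (cone G2)).

Definition rim (u : gV (dunion G1 G2)) : gV H :=
  match u with inl x => inl (Some x) | inr y => inr (Some y) end.

Lemma rim_inj : injective rim.
Proof. by case=> [x|x] [y|y] //= [->]. Qed.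

Lemma rim_adj (u v : gV (dunion G1 G2)) : gadj (rim u) (rim v) = gadj u v.
Proof. by case: u v => [x|x] [y|y]. Qed.

Variable d : nat.
Hypotheses (SG1 : in_S d.+1 G1) (SG2 : in_S d.+1 G2).

Lemma cone_pair_sphere (v : gV H) :
  if v \in rim @: setT then inB d.+1 (nbr setT v) else inS d.+1 (nbr setT v).
Proof.
have [[S1 B1] [S2 B2]] := (cone_spheres SG1, cone_spheres SG2).
case: v => [[x|] | [x|]].
- rewrite (imset_f rim (in_setT (inl x))) dunion_nbr_inl.
  by rewrite (inB_imset (@dunion_inl_inj _ _) (@dunion_adj_inl _ _)).
- rewrite ifN; last by apply/imsetP => -[[] ].
  by rewrite dunion_nbr_inl (inS_imset (@dunion_inl_inj _ _) (@dunion_adj_inl _ _)).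
- rewrite (imset_f rim (in_setT (inr x))) dunion_nbr_inr.
  by rewrite (inB_imset (@dunion_inr_inj _ _) (@dunion_adj_inr _ _)).
- rewrite ifN; last by apply/imsetP => -[[] ].
  by rewrite dunion_nbr_inr (inS_imset (@dunion_inr_inj _ _) (@dunion_adj_inr _ _)).
Qed.

Lemma inG_cone_pair : inG d.+2 [set: gV H].
Proof.
split=> [v _ | ]; first by have := cone_pair_sphere v; case: ifP; [right | left].
exists (inl None); split => //; have := cone_pair_sphere (inl None).
by case: ifP => [/imsetP [[]] | _ /inS_notB].
Qed.

Lemma boundary_cone_pair : is_boundary (inB d.+1) [set: gV H] (rim @: setT).
Proof.
move=> v; have := cone_pair_sphere v.
by case: ifP => [_ | _ /inS_notB]; split => // -[].
Qed.
End ConePair.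

Lemma cobordant_inS2 (G1 G2 : graph) : in_S 2 G1 -> in_S 2 G2 -> cobordant G1 G2.
Proof.
move=> SG1 SG2; exists (dunion (cone G1) (cone G2)).
split; first exact: inG_cone_pair SG1 SG2.
exists (@rim G1 G2 @: setT); split; first exact: boundary_cone_pair SG1 SG2.
by exists (@rim G1 G2); split; [exact: rim_inj | split=> // u v; rewrite rim_adj].
Qed.

Theorem mainTheorem6 :
  (forall G : graph, in_S 2 G -> cobordant G G) /\
  (forall G1 G2 : graph, in_S 2 G1 -> in_S 2 G2 ->
      cobordant G1 G2 -> cobordant G2 G1) /\
  (forall G1 G2 G3 : graph, in_S 2 G1 -> in_S 2 G2 -> in_S 2 G3 ->
      cobordant G1 G2 -> cobordant G2 G3 -> cobordant G1 G3).
Proof.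
split; first by move=> G SG; exact: cobordant_inS2.
split; first by move=> G1 G2 SG1 SG2 _; exact: cobordant_inS2.
by move=> G1 G2 G3 SG1 _ SG3 _ _; exact: cobordant_inS2.
Qed.
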